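(* Let $\mathcal{P}\subseteq\mathbb{Z}_{\geq0}$ with $0\in\mathcal{P}$, working with formal power series over a commutative ring $R\supseteq\mathbb{Q}$. Then $F^{\mathcal{P}}(z)=z\frac{\partial}{\partial z}\ln T^\mathcal{P}(z)$, i.e. $F^\mathcal{P}(z)=z\,\frac{\partial}{\partial z}T^\mathcal{P}(z)\big/T^\mathcal{P}(z)$, and for every $n\ge0$, $$[z^n]\,F^\mathcal{P}(z) = [z^n]\,e_\mathcal{P}(z)^n.$$
   Context: $[n]=\{1,\dots,n\}$; $[z^n]g$ is the coefficient of $z^n$. $e_\mathcal{P}(z)=\sum_{n\in\mathcal{P}}z^n/n!$. $T^\mathcal{P}(z)=\sum_t z^{|t|}/|t|!$ over labeled rooted trees $t$ (trees on vertex set $[|t|]$ with a distinguished root) in which every vertex has a number of children (neighbours farther from the root) in $\mathcal{P}$; since $0\in\mathcal{P}$, $T^\mathcal{P}(z)=z\cdot(\text{invertible series})$, so the quotient is a formal (Laurent) power series. $F^\mathcal{P}(z)=\sum_{n\ge0}c_nz^n/n!$ where $c_n$ is the number of functions $f:[n]\to[n]$ with $|f^{-1}(x)|\in\mathcal{P}$ for all $x\in[n]$ ($c_0=1$). *)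

From mathcomp Require Import all_boot all_order all_algebra.
Set Implicit Arguments. Unset Strict Implicit. Unset Printing Implicit Defensive.
Import GRing.Theory.
Local Open Scope ring_scope.

(* Formal power series over R, represented by their coefficient sequence:
   a : nat -> R stands for sum_n a n z^n. *)
Definition sone (R : nzRingType) : nat -> R := fun n => if n == 0%N then 1 else 0.
Definition sX (R : nzRingType) : nat -> R := fun n => if n == 1%N then 1 else 0.
Definition smul (R : nzRingType) (a b : nat -> R) : nat -> R :=
  fun n => \sum_(i < n.+1) a i * b (n - i)%N.
Definition spow (R : nzRingType) (a : nat -> R) (k : nat) : nat -> R :=
  iter k (smul a) (@sone R).
Definition sderiv (R : nzRingType) (a : nat -> R) : nat -> R :=
  fun n => n.+1%:R * a n.+1.

Definition eP (R : unitRingType) (P : pred nat) : nat -> R :=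
  fun n => if P n then (n`!%:R)^-1 else 0.

(* Labeled rooted trees on vertex set 'I_n (= [n] shifted to {0..n-1}),
   encoded by their parent function: par x = None iff x is the root,
   par x = Some y iff y is the neighbour of x on the path to the root. *)
Definition is_rooted_tree (n : nat) (par : {ffun 'I_n -> option 'I_n}) : bool :=
  (#|[set x | par x == None]| == 1%N) &&
  [forall x, iter n (obind par) (Some x) == None].

Definition nchildren (n : nat) (par : {ffun 'I_n -> option 'I_n}) (x : 'I_n) : nat :=
  #|[set y | par y == Some x]|.

Definition tree_count (P : pred nat) (n : nat) : nat :=
  #|[set par : {ffun 'I_n -> option 'I_n} |
      is_rooted_tree par && [forall x, P (nchildren par x)]]|.

Definition TP (R : unitRingType) (P : pred nat) : nat -> R :=
  fun n => (tree_count P n)%:R / (n`!)%:R.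

Definition fun_count (P : pred nat) (n : nat) : nat :=
  #|[set f : {ffun 'I_n -> 'I_n} | [forall x, P #|[set y | f y == x]|]]|.

Definition FP (R : unitRingType) (P : pred nat) : nat -> R :=
  fun n => (fun_count P n)%:R / (n`!)%:R.

From mathcomp Require Import all_boot all_order all_algebra.
From mathcomp Require Import zify.
From Stdlib Require Import FunctionalExtensionality.
Set Implicit Arguments. Unset Strict Implicit. Unset Printing Implicit Defensive.

(* Removing a point of the domain, resp. a leaf, shows that there are
   [n!/prod_x e_x!] functions [[n] -> [n]] with fiber sizes [e], and as many
   rooted trees on [[n+1]] with child counts [e].  Summing over [e] gives
   [[z^n] F = [z^n] p^n] and [(n+1) [z^(n+1)] T = [z^n] p^(n+1)] for [p = e_P].
   The identity [F T = z T'] then becomes the Lagrange-type convolution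
   [sum_i [z^i] p^i * [z^(k-i)] p^(k-i+1) / (k-i+1) = [z^k] p^(k+1)], proved
   for [p^(y+i)] in place of [p^i] by induction on [k], using
   [(k+1) [z^(k+1)] p^m = m [z^k] (p' p^(m-1))]. *)

Lemma card_set_nat (T : finType) (Q : pred T) : #|[set t | Q t]| = \sum_t Q t.
Proof. by rewrite -sum1_card big_mkcond; apply: eq_bigr => t _; rewrite inE; case: (Q t). Qed.

Lemma sum_card_fibers (T U : finType) (Q : pred T) (f : T -> option U) :
  \sum_u #|[set t | Q t && (f t == Some u)]| = #|[set t | Q t && (f t != None)]|.
Proof.
under eq_bigr => u _ do rewrite card_set_nat.
rewrite exchange_big card_set_nat.
apply: eq_bigr => t _; case: (f t) => [c|] /=; last first.
  by rewrite andbF big1 // => u _; rewrite andbF.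
rewrite (bigD1 c) //= eqxx big1 ?addn0 // => u /negbTE.
by rewrite (inj_eq Some_inj) eq_sym => ->; rewrite andbF.
Qed.

Definition dec_at (T : eqType) (j : T) (e : T -> nat) x := (e x - (x == j))%N.

Lemma sum_dec_at (T : finType) (e : T -> nat) j :
  (0 < e j)%N -> \sum_x dec_at j e x = (\sum_x e x).-1.
Proof.
move=> ej; rewrite (bigD1 j) //= [in RHS](bigD1 j) //= /dec_at eqxx.
rewrite (eq_bigr e) => [|x /negbTE ->]; last by rewrite subn0.
by lia.
Qed.

Lemma prod_fact_dec_at (T : finType) (e : T -> nat) j : (0 < e j)%N ->
  \prod_x (e x)`! = (e j * \prod_x (dec_at j e x)`!)%N.
Proof.
move=> ej; rewrite (bigD1 j) // [in RHS](bigD1 j) //= /dec_at eqxx.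
rewrite [in RHS](eq_bigr (fun x => (e x)`!)) => [|x /negbTE ->]; last by rewrite subn0.
by case: (e j) ej => // m _; rewrite subn1 factS mulnA.
Qed.

(* The recursion [(n+1)!/prod_u e_u! = sum_u n!/prod_x (e - delta_u)_x!] of
   multinomial coefficients, read as a count of [S] by the value of [f]. *)
Lemma card_mul_prod_fact (T U : finType) (S : {set T}) (f : T -> option U)
    (e : U -> nat) n :
  \sum_u e u = n.+1 ->
  (forall t, t \in S -> f t != None) ->
  (forall t u, t \in S -> f t = Some u -> 0 < e u)%N ->
  (forall u, 0 < e u ->
     #|[set t in S | f t == Some u]| * \prod_x (dec_at u e x)`! = n`!)%N ->
  (#|S| * \prod_u (e u)`! = n.+1`!)%N.
Proof.
move=> sum_e fS fS_pos fiber.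
have -> : #|S| = \sum_u #|[set t in S | f t == Some u]|.
  rewrite sum_card_fibers; apply: eq_card => t; rewrite !inE.
  by case: (boolP (t \in S)) => // /fS.
rewrite big_distrl /= factS -sum_e big_distrl /=; apply: eq_bigr => u _.
case: (posnP (e u)) => [eu0|eu_pos].
  rewrite eu0 mul0n (_ : #|_| = 0%N) ?mul0n //; apply: eq_card0 => t; rewrite !inE.
  by apply/negP => /andP[tS /eqP /(fS_pos _ _ tS)]; rewrite eu0.
by rewrite (prod_fact_dec_at eu_pos) mulnCA fiber.
Qed.

Section PartialFunctions.
Variables D B : finType.
Implicit Types (g : {ffun D -> option B}) (A : {set D}).

Definition fib g b := #|[set x | g x == Some b]|.
Definition clear_at a g : {ffun D -> option B} :=
  [ffun x => if x == a then None else g x].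
Definition set_at a b g : {ffun D -> option B} :=
  [ffun x => if x == a then Some b else g x].

Lemma clear_at_set_at a b g : g a = None -> clear_at a (set_at a b g) = g.
Proof. by move=> ga; apply/ffunP => x; rewrite !ffunE; case: eqP => // ->. Qed.

Lemma set_at_clear_at a b g : g a = Some b -> set_at a b (clear_at a g) = g.
Proof. by move=> ga; apply/ffunP => x; rewrite !ffunE; case: eqP => // ->. Qed.

Lemma card_set_at a b (S : {set {ffun D -> option B}}) :
  (forall g, g \in S -> g a = None) -> #|set_at a b @: S| = #|S|.
Proof.
move=> Sa; rewrite card_in_imset // => g1 g2 /Sa g1a /Sa g2a eq12.
by rewrite -(clear_at_set_at b g1a) eq12 clear_at_set_at.
Qed.

Lemma fib_clear_at a g b : fib g b = (fib (clear_at a g) b + (g a == Some b))%N.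
Proof.
rewrite /fib (cardsD1 a) addnC inE; congr (_ + _)%N.
by apply: eq_card => y; rewrite !inE ffunE; case: (y == a).
Qed.

Lemma fib_clear_at_Some a b g c :
  g a = Some b -> fib (clear_at a g) c = dec_at b (fib g) c.
Proof.
by move=> ga; rewrite /dec_at (fib_clear_at a g c) ga (inj_eq Some_inj) eq_sym addnK.
Qed.

Lemma fib_set_at a b g c : g a = None ->
  fib (set_at a b g) c = (fib g c + (c == b))%N.
Proof.
move=> ga; rewrite (fib_clear_at a) clear_at_set_at // ffunE eqxx.
by rewrite (inj_eq Some_inj) eq_sym.
Qed.

Lemma fib_gt0 g a b : g a = Some b -> (0 < fib g b)%N.
Proof. by move=> ga; apply/card_gt0P; exists a; rewrite inE ga. Qed.

Lemma sum_fib g : \sum_b fib g b = #|[set x | g x != None]|.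
Proof. exact: (sum_card_fibers predT). Qed.

Definition pfuns A (d : B -> nat) := [set g : {ffun D -> option B} |
  [forall x, (g x != None) == (x \in A)] & [forall b, fib g b == d b]].

Lemma pfunsP A d g : reflect
  ((forall x, (g x != None) = (x \in A)) /\ forall b, fib g b = d b) (g \in pfuns A d).
Proof.
rewrite inE; apply: (iffP andP) => [[/forallP dom /forallP fibs]|[dom fibs]].
  by split=> [x|b]; [move/eqP: (dom x) | move/eqP: (fibs b)].
by split; apply/forallP => x; apply/eqP; [exact: dom | exact: fibs].
Qed.

Lemma pfuns_fiber A d a b : a \in A -> (0 < d b)%N ->
  [set g in pfuns A d | g a == Some b] = set_at a b @: pfuns (A :\ a) (dec_at b d).
Proof.
move=> aA db; apply/setP => g; rewrite inE; apply/andP/imsetP.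
  case=> /pfunsP[dom fibs] /eqP ga; exists (clear_at a g); last first.
    by rewrite set_at_clear_at.
  apply/pfunsP; split=> [x|c]; last by rewrite (fib_clear_at_Some _ ga) /dec_at fibs.
  by rewrite ffunE in_setD1; case: (eqVneq x a) => //= _; rewrite dom.
case=> g' /pfunsP[dom fibs] ->.
have g'a : g' a = None by apply/eqP; rewrite -[_ == None]negbK dom setD11.
split; last by rewrite ffunE eqxx.
apply/pfunsP; split=> [x|c].
  by rewrite ffunE; case: (eqVneq x a) => [->|xa] //; rewrite dom in_setD1 xa.
rewrite fib_set_at // fibs /dec_at; case: eqP => [->|_]; last by rewrite subn0 addn0.
by rewrite subn1 addn1 prednK.
Qed.

Lemma card_pfuns n A d : #|A| = n -> \sum_b d b = n ->
  (#|pfuns A d| * \prod_b (d b)`! = n`!)%N.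
Proof.
elim: n A d => [|n IH] A d cardA sum_d.
  have d0 b : d b = 0%N by move/eqP: sum_d; rewrite sum_nat_eq0 => /forallP/(_ b)/eqP.
  have A0 : A = set0 by apply/eqP; rewrite -cards_eq0 cardA.
  rewrite big1 => [|b _]; last by rewrite d0.
  suff -> : pfuns A d = [set [ffun => None]] by rewrite cards1.
  apply/setP => g; rewrite in_set1; apply/pfunsP/eqP => [[dom _]|->].
    by apply/ffunP => x; rewrite ffunE; apply/eqP; rewrite -[_ == None]negbK dom A0 inE.
  split=> [x|b]; first by rewrite ffunE A0 inE.
  by rewrite d0 /fib; apply: eq_card0 => x; rewrite inE ffunE.
have /card_gt0P[a aA] : (0 < #|A|)%N by rewrite cardA.
apply: (card_mul_prod_fact (f := fun g => g a)) => //.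
- by move=> g /pfunsP[dom _]; rewrite dom.
- by move=> g b /pfunsP[_ <-]; apply: fib_gt0.
- move=> b db; rewrite pfuns_fiber // card_set_at; last first.
    by move=> g /pfunsP[dom _]; apply/eqP; rewrite -[_ == None]negbK dom setD11.
  apply: IH; first by move: cardA; rewrite (cardsD1 a) aA => -[].
  by rewrite sum_dec_at // sum_d.
Qed.

End PartialFunctions.

Lemma exists_zero_in (T : finType) (A : {set T}) (e : T -> nat) n :
  #|A| = n.+1 -> \sum_x e x = n -> exists2 i, i \in A & e i = 0%N.
Proof.
move=> cardA sum_e.
suff /exists_inP[i iA /eqP ei0] : [exists i in A, e i == 0%N] by exists i.
apply: contraT; rewrite negb_exists_in => /forall_inP e_pos.
suff : (n.+1 <= n)%N by rewrite ltnn.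
rewrite -{1}cardA -sum_e -sum1_card.
apply: (@leq_trans (\sum_(x in A) e x)); first by apply: leq_sum => x /e_pos; rewrite lt0n.
by rewrite [X in (_ <= X)%N](bigID (mem A)) leq_addr.
Qed.

Section RootedTrees.
Variable D : finType.
Implicit Types (f : D -> option D) (par : {ffun D -> option D}) (A : {set D}).

Lemma iter_obind_None f m : iter m (obind f) None = None.
Proof. by elim: m => //= m ->. Qed.

Lemma iter_obind_card f x k :
  iter k (obind f) (Some x) = None -> iter #|D| (obind f) (Some x) = None.
Proof.
move=> fk; have reach : fconnect (obind f) (Some x) None by rewrite -fk fconnect_iter.
have idx_le : (findex (obind f) (Some x) None <= #|D|)%N.
  by rewrite -ltnS -card_option (leq_trans (findex_max reach)) ?max_card.
by rewrite -(subnK idx_le) iterD iter_findex // iter_obind_None.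
Qed.

Lemma iter_obind_agree f1 f2 i x :
  (forall y, f1 y != Some i) -> (forall z, z != i -> f2 z = f1 z) -> x != i ->
  forall k, iter k (obind f2) (Some x) = iter k (obind f1) (Some x).
Proof.
move=> no_i f21 xi.
suff agree k : iter k (obind f2) (Some x) = iter k (obind f1) (Some x) /\
               iter k (obind f1) (Some x) != Some i by move=> k; case: (agree k).
elim: k => [|k [IH1 IH2]] /=; first by rewrite (inj_eq Some_inj).
rewrite IH1; case E: (iter k (obind f1) (Some x)) => [z|] //=.
by rewrite f21 ?no_i // -(inj_eq Some_inj) -E.
Qed.

Definition tree_on A par : bool :=
  [&& [forall x, (x \notin A) ==> (par x == None)],
      [forall x, forall y, (par x == Some y) ==> (y \in A)],
      #|[set x in A | par x == None]| == 1%N &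
      [forall x, iter #|D| (obind par) (Some x) == None]].

Lemma treeP A par : reflect
  [/\ forall x, x \notin A -> par x = None,
      forall x y, par x = Some y -> y \in A,
      #|[set x in A | par x == None]| = 1%N &
      forall x, iter #|D| (obind par) (Some x) = None] (tree_on A par).
Proof.
apply: (iffP and4P) => [[/forall_inP out /forallP up /eqP root /forallP reach]|].
  split=> [x /out/eqP //|x y pxy|//|x]; last exact/eqP.
  by have /forallP/(_ y)/implyP := up x; apply; rewrite pxy.
case=> out up root reach; split; last 2 first.
- by rewrite root.
- by apply/forallP => x; rewrite reach.
- by apply/forall_inP => x /out ->.
by apply/forallP => x; apply/forallP => y; apply/implyP => /eqP /up.
Qed.

Lemma fib0_parent par i y : fib par i = 0%N -> par y != Some i.
Proof. by move=> leaf; apply: contra_eqN leaf => /eqP /fib_gt0; rewrite lt0n. Qed.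

Lemma tree_root_unique A par r x : tree_on A par ->
  r \in A -> par r = None -> x \in A -> par x = None -> x = r.
Proof.
case/treeP => _ _ /eqP/cards1P[r0 roots] _ rA pr xA px.
have root_r0 z : z \in A -> par z = None -> z = r0.
  by move=> zA pz; apply/set1P; rewrite -roots inE zA pz.
by rewrite (root_r0 x) // (root_r0 r).
Qed.

(* Otherwise the path from another vertex could never stop. *)
Lemma leaf_has_parent A par i : tree_on A par -> i \in A -> fib par i = 0%N ->
  (1 < #|A|)%N -> par i != None.
Proof.
move=> tree iA leaf cardA; apply/eqP => pi.
have [x] : exists x, x \in A :\ i.
  by apply/card_gt0P; rewrite (cardsD1 i) iA in cardA.
rewrite in_setD1 => /andP[xi xA].
suff path_in_A k :
    exists2 z, iter k (obind par) (Some x) = Some z & (z \in A) && (z != i).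
  by case/treeP: tree => _ _ _ reach; case: (path_in_A #|D|) => z; rewrite reach.
elim: k => [|k [z IH /andP[zA zi]]]; first by exists x; rewrite ?xA.
case/treeP: (tree) => _ up _ _; rewrite iterS IH /=; case pz: (par z) => [w|].
  exists w => //; rewrite (up _ _ pz) /=.
  by apply: contraNneq (fib0_parent z leaf) => <-; rewrite pz.
by move: zi; rewrite (tree_root_unique tree iA pi zA pz) eqxx.
Qed.

Lemma tree_clear_leaf A par i j : tree_on A par -> fib par i = 0%N ->
  par i = Some j -> tree_on (A :\ i) (clear_at i par).
Proof.
case/treeP => out up roots reach leaf pi; apply/treeP; split.
- move=> x; rewrite in_setD1 negb_and negbK ffunE.
  by case: eqP => //= _; apply: out.
- move=> x y; rewrite ffunE; case: eqP => // _ pxy.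
  rewrite in_setD1 (up _ _ pxy) andbT.
  by apply: contraNneq (fib0_parent x leaf) => <-; apply/eqP.
- rewrite -roots; apply: eq_card => x; rewrite !inE ffunE.
  by case: (eqVneq x i) => [->|] //=; rewrite pi andbF.
- move=> x; case: (eqVneq x i) => [->|xi].
    by apply: (@iter_obind_card _ _ 1); rewrite /= ffunE eqxx.
  rewrite (iter_obind_agree (f1 := par) (i := i)) //.
  + by move=> y; apply: fib0_parent.
  + by move=> z /negbTE zi; rewrite ffunE zi.
Qed.

Lemma tree_set_leaf A par i j : tree_on (A :\ i) par -> i \in A -> j \in A :\ i ->
  tree_on A (set_at i j par).
Proof.
case/treeP => out up roots reach iA jAi.
have no_child y : par y != Some i by apply/eqP => /up; rewrite setD11.
have agree x : x != i -> forall k,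
    iter k (obind (set_at i j par)) (Some x) = iter k (obind par) (Some x).
  by move=> xi; apply: iter_obind_agree => // z /negbTE zi; rewrite ffunE zi.
have ji : j != i by move: jAi; rewrite in_setD1 => /andP[].
apply/treeP; split.
- move=> x xA; rewrite ffunE; case: eqP => [xi|_]; first by rewrite xi iA in xA.
  by apply: out; rewrite in_setD1 (negbTE xA) andbF.
- move=> x y; rewrite ffunE; case: eqP => [_ [<-]|_ /up]; last by case/setD1P.
  by case/setD1P: jAi.
- rewrite -roots; apply: eq_card => x; rewrite !inE ffunE.
  by case: (eqVneq x i) => //=; rewrite andbF.
- move=> x; case: (eqVneq x i) => [->|xi]; last by rewrite agree // reach.
  apply: (@iter_obind_card _ _ #|D|.+1).
  by rewrite iterSr /= ffunE eqxx agree // reach.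
Qed.

Lemma sum_fib_tree A par : tree_on A par -> \sum_x fib par x = (#|A| - 1)%N.
Proof.
case/treeP => out _ roots _; rewrite sum_fib.
have -> : [set x | par x != None] = A :\: [set x in A | par x == None].
  apply/setP => x; rewrite !inE; case: (boolP (x \in A)) => xA /=.
    by rewrite andbT.
  by rewrite out.
by rewrite cardsD (setIidPr _) ?roots //; apply/subsetP => x; rewrite inE => /andP[].
Qed.

Definition trees A (e : D -> nat) :=
  [set par | tree_on A par & [forall x, fib par x == e x]].

Lemma treesP A e par :
  reflect (tree_on A par /\ forall x, fib par x = e x) (par \in trees A e).
Proof.
rewrite inE; apply: (iffP andP) => [[tree /forallP fibs]|[tree fibs]].
  by split=> // x; apply/eqP.
by split=> //; apply/forallP => x; rewrite fibs.
Qed.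

Lemma trees_singleton a e :
  (forall x, e x = 0%N) -> trees [set a] e = [set [ffun => None]].
Proof.
move=> e0; apply/setP => par; rewrite in_set1; apply/treesP/eqP => [[tree _]|->].
  case/treeP: (tree) => out up _ reach; apply/ffunP => x; rewrite ffunE.
  case: (eqVneq x a) => [->|xa]; last by apply: out; rewrite in_set1.
  case pa: (par a) => [y|] //; move: (up _ _ pa); rewrite in_set1 => /eqP ya.
  have loop k : iter k (obind par) (Some a) = Some a.
    by elim: k => //= k ->; rewrite /= pa ya.
  by move: (reach a); rewrite loop.
split=> [|x]; last by rewrite e0; apply: eq_card0 => y; rewrite inE ffunE.
apply/treeP; split=> [x _|x y|| x]; rewrite ?ffunE //.
  by rewrite -(cards1 a); apply: eq_card => x; rewrite !inE ffunE andbT.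
by apply: (@iter_obind_card _ _ 1); rewrite /= ffunE.
Qed.

Lemma trees_fiber A e i j : (forall x, x \notin A -> e x = 0%N) ->
  i \in A -> e i = 0%N -> (0 < e j)%N ->
  [set par in trees A e | par i == Some j] = set_at i j @: trees (A :\ i) (dec_at j e).
Proof.
move=> out iA ei ej; apply/setP => par; rewrite inE; apply/andP/imsetP.
  case=> /treesP[tree fibs] /eqP pi; exists (clear_at i par); last first.
    by rewrite set_at_clear_at.
  apply/treesP; split; first by apply: (tree_clear_leaf tree _ pi); rewrite fibs.
  by move=> x; rewrite (fib_clear_at_Some _ pi) /dec_at fibs.
case=> par' /treesP[tree fibs] ->.
have pi : par' i = None by case/treeP: tree => out' _ _ _; rewrite out' ?setD11.
have jAi : j \in A :\ i.
  rewrite in_setD1; apply/andP; split; first by apply: contraTneq ej => ->; rewrite ei.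
  by apply: contraTT ej => /out ->.
split; last by rewrite ffunE eqxx.
apply/treesP; split; first exact: tree_set_leaf.
move=> x; rewrite fib_set_at // fibs /dec_at; case: eqP => [->|_]; last by rewrite subn0 addn0.
by rewrite subn1 addn1 prednK.
Qed.

Lemma card_trees n A e : #|A| = n.+1 -> (forall x, x \notin A -> e x = 0%N) ->
  \sum_x e x = n -> (#|trees A e| * \prod_x (e x)`! = n`!)%N.
Proof.
elim: n A e => [|n IH] A e cardA out sum_e.
  have e0 x : e x = 0%N by move/eqP: sum_e; rewrite sum_nat_eq0 => /forallP/(_ x)/eqP.
  have [a ->] := cards1P (introT eqP cardA).
  by rewrite trees_singleton // cards1 big1 // => x _; rewrite e0.
have [i iA ei] := exists_zero_in cardA sum_e.
apply: (card_mul_prod_fact (f := fun par => par i)) => //.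
- move=> par /treesP[tree fibs]; apply: leaf_has_parent tree iA _ _.
    by rewrite fibs.
  by rewrite cardA.
- by move=> par j /treesP[_ <-]; apply: fib_gt0.
- move=> j ej; rewrite trees_fiber // card_set_at; last first.
    by move=> par /treesP[/treeP[out' _ _ _] _]; rewrite out' ?setD11.
  apply: IH; first by move: cardA; rewrite (cardsD1 i) iA => -[].
    move=> x; rewrite in_setD1 negb_and negbK /dec_at => /orP[/eqP ->|/out ->] //.
    by rewrite ei.
  by rewrite sum_dec_at // sum_e.
Qed.

End RootedTrees.

Section FiberVectors.
Variables D B : finType.
Implicit Types (g : {ffun D -> option B}).

Definition fibvec g : {ffun B -> 'I_#|D|.+1} := [ffun b => inord (fib g b)].

Lemma fibvecP g e : (fibvec g == e) = [forall b, fib g b == e b].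
Proof.
have fib_lt b : (fib g b < #|D|.+1)%N by rewrite ltnS max_card.
apply/eqP/forallP => [<- b|fibs]; first by rewrite ffunE inordK.
by apply/ffunP => b; apply/val_inj; rewrite ffunE /= inordK // (eqP (fibs b)).
Qed.

Lemma card_by_fibvec (Q : pred {ffun D -> option B}) (P : pred nat) :
  #|[set g | Q g & [forall b, P (fib g b)]]| =
  (\sum_(e : {ffun B -> 'I_#|D|.+1})
     [forall b, P (e b)] * #|[set g | Q g & [forall b, fib g b == e b]]|)%N.
Proof.
transitivity (\sum_(e : {ffun B -> 'I_#|D|.+1})
  #|[set g | Q g && [forall b, P (fib g b)] && (Some (fibvec g) == Some e)]|).
  by rewrite sum_card_fibers; apply: eq_card => g; rewrite !inE andbT.
apply: eq_bigr => e _.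
case: (boolP [forall b, P (e b)]) => /forallP Pe; rewrite ?mul1n ?mul0n.
  apply: eq_card => g; rewrite !inE (inj_eq Some_inj) fibvecP -andbA; congr (_ && _).
  apply: andb_idl => /forallP fibs; apply/forallP => b.
  by rewrite (eqP (fibs b)).
apply: eq_card0 => g; rewrite !inE (inj_eq Some_inj) fibvecP.
apply/negP => /andP[/andP[_ /forallP Pfib] /forallP fibs]; apply: Pe => b.
by rewrite -(eqP (fibs b)).
Qed.

End FiberVectors.

Lemma tree_on_rooted n (par : {ffun 'I_n -> option 'I_n}) :
  tree_on [set: 'I_n] par = is_rooted_tree par.
Proof.
rewrite /tree_on /is_rooted_tree card_ord.
have -> : [forall x, (x \notin [set: 'I_n]) ==> (par x == None)].
  by apply/forallP => x; rewrite inE.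
have -> : [forall x, forall y, (par x == Some y) ==> (y \in [set: 'I_n])].
  by apply/forallP => x; apply/forallP => y; rewrite inE implybT.
by rewrite (eq_card (B := [set x | par x == None])) // => x; rewrite !inE.
Qed.

Lemma tree_count_fibvec P n : tree_count P n =
  (\sum_(e : {ffun 'I_n -> 'I_#|'I_n|.+1})
     [forall x, P (e x)] * #|trees [set: 'I_n] (fun x => e x)|)%N.
Proof.
by rewrite -card_by_fibvec; apply: eq_card => par; rewrite !inE tree_on_rooted.
Qed.

Lemma fun_count_total P n : fun_count P n = #|[set g : {ffun 'I_n -> option 'I_n} |
  [forall x, g x != None] & [forall b, P (fib g b)]]|.
Proof.
pose lift (f : {ffun 'I_n -> 'I_n}) : {ffun 'I_n -> option 'I_n} := [ffun x => Some (f x)].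
have lift_inj : injective lift.
  by move=> f1 f2 /ffunP eq12; apply/ffunP => x; move: (eq12 x); rewrite !ffunE => -[].
have fib_lift f x : fib (lift f) x = #|[set y | f y == x]|.
  by apply: eq_card => y; rewrite !inE ffunE (inj_eq Some_inj).
rewrite /fun_count -(card_imset _ lift_inj); apply: eq_card => g; apply/imsetP/idP.
  case=> f; rewrite !inE => /forallP Pf ->; apply/andP; split; apply/forallP => x.
    by rewrite ffunE.
  by rewrite fib_lift Pf.
rewrite inE => /andP[/forallP defined /forallP Pfib].
have gS x : g x = Some (odflt x (g x)) by move: (defined x); case: (g x).
have g_lift : g = lift [ffun x => odflt x (g x)].
  by apply/ffunP => x; rewrite !ffunE -gS.
exists [ffun x => odflt x (g x)] => //.
by rewrite inE; apply/forallP => b; rewrite -fib_lift -g_lift.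
Qed.

Lemma fun_count_fibvec P n : fun_count P n =
  (\sum_(e : {ffun 'I_n -> 'I_#|'I_n|.+1})
     [forall x, P (e x)] * #|pfuns [set: 'I_n] (fun x => e x)|)%N.
Proof.
rewrite fun_count_total card_by_fibvec; apply: eq_bigr => e _; congr (_ * _)%N.
apply: eq_card => g; rewrite !inE; congr (_ && _).
by apply: eq_forallb => x; rewrite inE eqb_id.
Qed.

Import GRing.Theory.
Local Open Scope ring_scope.

Lemma sum_triangle_exchange (V : nmodType) (F : nat -> nat -> V) K :
  \sum_(i < K.+1) \sum_(l < i.+1) F l (i - l)%N =
  \sum_(l < K.+1) \sum_(j < (K - l).+1) F l j.
Proof.
transitivity (\sum_(i < K.+1) \sum_(l < K.+1 | (l <= i)%N) F l (i - l)%N).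
  by apply: eq_bigr => i _; rewrite (big_ord_widen K.+1 (fun l => F l (i - l)%N)).
rewrite (exchange_big_dep xpredT) //=; apply: eq_bigr => l _.
have lK : (l <= K)%N by rewrite -ltnS.
rewrite -(big_mkord (fun i => (l <= i)%N) (fun i => F l (i - l)%N)).
rewrite (big_cat_nat (n := l)) //=; last exact: ltnW.
rewrite big_nat_cond big1 ?add0r => [|i /andP[/andP[_ il] li]]; last first.
  by rewrite leqNgt il in li.
rewrite big_nat_cond -(add0n l) big_addn add0n subSn // big_mkord.
apply: eq_big => [j|j _]; last by rewrite addnK.
by have := ltn_ord j; lia.
Qed.

Lemma sum_triangle_sym (V : nmodType) (F : nat -> nat -> V) K :
  \sum_(a < K.+1) \sum_(b < (K - a).+1) F a b =
  \sum_(b < K.+1) \sum_(a < (K - b).+1) F a b.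
Proof.
transitivity (\sum_(a < K.+1) \sum_(b < K.+1 | (a + b <= K)%N) F a b).
  apply: eq_bigr => a _; rewrite (big_ord_widen K.+1 (F a)) ?ltnS ?leq_subr //.
  by apply: eq_bigl => b; rewrite ltnS leq_subRL // -ltnS.
rewrite (exchange_big_dep xpredT) //=; apply: eq_bigr => b _.
rewrite (big_ord_widen K.+1 (fun a => F a b)) ?ltnS ?leq_subr //.
by apply: eq_bigl => a; rewrite ltnS leq_subRL 1?addnC // -ltnS.
Qed.

Section LagrangeConvolution.
Variable R : comUnitRingType.
Hypothesis natr_unit : forall n : nat, n.+1%:R \is a @GRing.unit R.
Variable p : {poly R}.

(* With [T = z p(T)], [diag_coef y] and [tree_coef] are the coefficients of
   [B_y = sum_i [w^i] p(w)^(y+i) z^i] and of [T/z]; [diag_tree_conv_eq] below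
   is [B_y * T/z = B_(y+1)]. *)
Definition diag_coef y i := (p ^+ (y + i))`_i.
Definition diag_conv x y M := \sum_(i < M.+1) diag_coef x i * diag_coef y (M - i).
Definition tree_coef j := (p ^+ j.+1)`_j / j.+1%:R.
Definition diag_tree_conv y K := \sum_(i < K.+1) diag_coef y i * tree_coef (K - i).

Lemma coef0_exp m : (p ^+ m)`_0 = p`_0 ^+ m.
Proof. by elim: m => [|m IH]; rewrite ?expr0 ?coef1 // !exprS coef0M IH. Qed.

Lemma coef_exp_deriv m k :
  (p ^+ m)`_k.+1 *+ k.+1 = (\sum_(l < k.+1) p^`()`_l * (p ^+ m.-1)`_(k - l)) *+ m.
Proof. by rewrite -coef_deriv deriv_exp coefMn coefM. Qed.

Lemma diag_coefS y i :
  diag_coef y.+1 i = \sum_(l < i.+1) p`_l * diag_coef (y + l) (i - l).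
Proof.
rewrite /diag_coef addSn exprS coefM; apply: eq_bigr => l _.
by rewrite -addnA subnKC // -ltnS.
Qed.

Lemma diag_coef_deriv y i : diag_coef y i.+1 *+ i.+1 =
  (\sum_(l < i.+1) p^`()`_l * diag_coef (y + l) (i - l)) *+ (y + i).+1.
Proof.
rewrite /diag_coef coef_exp_deriv addnS; congr (_ *+ _); apply: eq_bigr => l _.
by rewrite -addnA subnKC // -ltnS.
Qed.

Lemma diag_conv_sym x y M : diag_conv x y M = diag_conv y x M.
Proof.
rewrite /diag_conv (reindex_inj rev_ord_inj) /=; apply: eq_bigr => i _.
by rewrite subSS subKn 1?mulrC // -ltnS.
Qed.

Lemma diag_convSl x y M :
  diag_conv x.+1 y M = \sum_(l < M.+1) p`_l * diag_conv (x + l) y (M - l).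
Proof.
pose F l j := p`_l * diag_coef (x + l) j * diag_coef y (M - l - j).
transitivity (\sum_(i < M.+1) \sum_(l < i.+1) F l (i - l)%N).
  apply: eq_bigr => i _; rewrite diag_coefS mulr_suml; apply: eq_bigr => l _.
  by rewrite /F -subnDA subnKC // -ltnS.
rewrite sum_triangle_exchange; apply: eq_bigr => l _; rewrite /diag_conv mulr_sumr.
by apply: eq_bigr => j _; rewrite mulrA.
Qed.

Lemma diag_conv_shiftn_of M : (forall x y, diag_conv x.+1 y M = diag_conv x y.+1 M) ->
  forall r x y, diag_conv (x + r) y M = diag_conv x (y + r) M.
Proof. by move=> shift; elim=> [|r IH] x y; rewrite ?addn0 // !addnS shift IH addSn. Qed.

Lemma diag_conv_shift x y M : diag_conv x.+1 y M = diag_conv x y.+1 M.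
Proof.
elim/ltn_ind: M x y => -[|M] IH x y.
  by rewrite /diag_conv !big_ord1 /diag_coef !addn0 !coef0_exp !exprS mulrCA mulrA.
rewrite diag_convSl diag_conv_sym diag_convSl; apply: eq_bigr => -[[|l] lM] _ /=.
  by rewrite !addn0 diag_conv_sym.
rewrite [in RHS]diag_conv_sym; congr (_ * _); apply: diag_conv_shiftn_of => x' y'.
by apply: IH; rewrite subSS ltnS leq_subr.
Qed.

Lemma diag_conv_shiftn r x y M : diag_conv (x + r) y M = diag_conv x (y + r) M.
Proof. by apply: diag_conv_shiftn_of => x' y'; apply: diag_conv_shift. Qed.

Lemma tree_coef_mul j : tree_coef j *+ j.+1 = diag_coef 1 j.
Proof. by rewrite /tree_coef /diag_coef add1n -mulr_natr divrK. Qed.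

Lemma tree_coef_deriv j :
  tree_coef j.+1 *+ j.+1 = \sum_(l < j.+1) p^`()`_l * diag_coef l.+1 (j - l).
Proof.
rewrite /tree_coef -mulrnAl coef_exp_deriv -mulr_natr mulrK //.
by apply: eq_bigr => l _; rewrite /diag_coef addSn subnKC // -ltnS.
Qed.

Lemma diag_tree_conv_derivl y k :
  \sum_(i < k.+2) diag_coef y i *+ i * tree_coef (k.+1 - i) =
  \sum_(l < k.+1) p^`()`_l * \sum_(j < (k - l).+1)
     (diag_coef (y + l) j * tree_coef (k - l - j)) *+ (y + l + j).+1.
Proof.
pose G l j := p^`()`_l * (diag_coef (y + l) j * tree_coef (k - l - j)) *+ (y + l + j).+1.
rewrite big_ord_recl mulr0n mul0r add0r.
transitivity (\sum_(i < k.+1) \sum_(l < i.+1) G l (i - l)%N).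
  apply: eq_bigr => i _; rewrite lift0 subSS diag_coef_deriv mulrnAl mulr_suml.
  rewrite -sumrMnl; apply: eq_bigr => l _; have li : (l <= i)%N by rewrite -ltnS.
  by rewrite /G -subnDA subnKC // -addnA subnKC // mulrA.
rewrite (sum_triangle_exchange G); apply: eq_bigr => l _; rewrite mulr_sumr.
by apply: eq_bigr => j _; rewrite mulrnAr.
Qed.

Lemma diag_tree_conv_derivr y k :
  \sum_(i < k.+2) diag_coef y i * (tree_coef (k.+1 - i) *+ (k.+1 - i)) =
  \sum_(l < k.+1) p^`()`_l * \sum_(j < (k - l).+1)
     (diag_coef (y + l) j * tree_coef (k - l - j)) *+ (k - l - j).+1.
Proof.
rewrite big_ord_recr /= subnn mulr0n mulr0 addr0.
transitivity (\sum_(i < k.+1) \sum_(l < (k - i).+1)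
                diag_coef y i * (p^`()`_l * diag_coef l.+1 (k - i - l))).
  apply: eq_bigr => i _; rewrite subSn -1?ltnS //.
  by rewrite tree_coef_deriv mulr_sumr.
rewrite (sum_triangle_sym
  (fun i l => diag_coef y i * (p^`()`_l * diag_coef l.+1 (k - i - l)))).
apply: eq_bigr => l _; have lk : (l <= k)%N by rewrite -ltnS.
transitivity (p^`()`_l * diag_conv y l.+1 (k - l)).
  rewrite /diag_conv mulr_sumr; apply: eq_bigr => i _.
  by rewrite mulrCA subnAC.
rewrite -[l.+1]add1n -diag_conv_shiftn /diag_conv; congr (_ * _); apply: eq_bigr => j _.
by rewrite -tree_coef_mul mulrnAr.
Qed.

Lemma diag_tree_conv_deriv y k : diag_tree_conv y k.+1 *+ k.+1 =
  (\sum_(l < k.+1) p^`()`_l * diag_tree_conv (y + l) (k - l)) *+ (y.+1 + k).+1.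
Proof.
transitivity (\sum_(i < k.+2) (diag_coef y i *+ i * tree_coef (k.+1 - i)
                 + diag_coef y i * (tree_coef (k.+1 - i) *+ (k.+1 - i)))).
  rewrite /diag_tree_conv -sumrMnl; apply: eq_bigr => i _.
  by rewrite mulrnAl mulrnAr -mulrnDr subnKC // -ltnS.
rewrite big_split /= diag_tree_conv_derivl diag_tree_conv_derivr -big_split /= -sumrMnl.
apply: eq_bigr => l _; rewrite -mulrDr -mulrnAr; congr (_ * _).
rewrite /diag_tree_conv -sumrMnl -big_split /=; apply: eq_bigr => j _.
rewrite -mulrnDr; congr (_ *+ _); have := ltn_ord l; have := ltn_ord j; lia.
Qed.

Lemma diag_tree_conv_eq y K : diag_tree_conv y K = diag_coef y.+1 K.
Proof.
elim/ltn_ind: K y => -[|k] IH y.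
  by rewrite /diag_tree_conv big_ord1 /tree_coef /diag_coef !addn0 divr1 !coef0_exp -exprSr.
apply: (@mulIr _ k.+1%:R); first exact: natr_unit.
rewrite !mulr_natr diag_tree_conv_deriv diag_coef_deriv.
by congr (_ *+ _); apply: eq_bigr => l _; rewrite IH ?addSn // ltnS leq_subr.
Qed.

End LagrangeConvolution.

Lemma spow_coef_poly (R : comNzRingType) (phi : nat -> R) N m k : (k < N)%N ->
  spow phi m k = ((\poly_(j < N) phi j) ^+ m)`_k.
Proof.
elim: m k => [|m IH] k kN; first by rewrite expr0 coef1 /spow /sone /=; case: (k == 0%N).
rewrite /spow iterS -/(spow phi m) exprS coefM; apply: eq_bigr => i _.
rewrite coef_poly IH ?(leq_ltn_trans (leq_subr _ _)) //.
by rewrite (leq_ltn_trans _ kN) // -ltnS.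
Qed.

Lemma prod_scale_monomial (R : comNzRingType) (I : finType) (c : I -> R) (d : I -> nat) :
  \prod_i (c i *: 'X^(d i)) = (\prod_i c i) *: 'X^(\sum_i d i).
Proof.
apply: (big_rec3 (fun (q : {poly R}) x y => q = x *: 'X^y)); first by rewrite scale1r.
by move=> i q x y _ ->; rewrite exprD -scalerAl -scalerAr scalerA.
Qed.

Lemma coef_poly_exp (R : comNzRingType) (phi : nat -> R) b m k :
  ((\poly_(j < b) phi j) ^+ m)`_k =
  \sum_(e : {ffun 'I_m -> 'I_b} | (\sum_x (e x : nat) == k)%N) \prod_x phi (e x).
Proof.
have -> : (\poly_(j < b) phi j) ^+ m = \prod_(x : 'I_m) \sum_(j : 'I_b) phi j *: 'X^j.
  by rewrite prodr_const card_ord poly_def.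
rewrite bigA_distr_bigA /=.
under eq_bigr => e _ do rewrite prod_scale_monomial.
by rewrite coef_sumMXn.
Qed.

Lemma smul_sX (R : nzRingType) (a : nat -> R) n :
  smul (@sX R) a n = if n is n'.+1 then a n' else 0.
Proof.
case: n => [|n]; first by rewrite /smul big_ord1 /sX mul0r.
rewrite /smul 2!big_ord_recl big1 => [|i _]; last by rewrite /sX mul0r.
by rewrite /sX /= mul0r mul1r add0r addr0 subn1.
Qed.

Section GeneratingFunctions.
Variable R : comUnitRingType.
Hypothesis natr_unit : forall n : nat, n.+1%:R \is a @GRing.unit R.
Variable P : pred nat.

Lemma natr_unit_gt0 m : (0 < m)%N -> m%:R \is a @GRing.unit R.
Proof. by case: m => // m _; apply: natr_unit. Qed.

Lemma natr_div_eq_inv (x y z : nat) : (x * y = z)%N -> (0 < z)%N ->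
  x%:R / z%:R = (y%:R)^-1 :> R.
Proof.
move=> <-; rewrite muln_gt0 => /andP[x_gt0 y_gt0].
by rewrite natrM invrM ?natr_unit_gt0 // mulrCA divrr ?mulr1 ?natr_unit_gt0.
Qed.

Lemma prod_eP m b (e : {ffun 'I_m -> 'I_b}) : \prod_x eP R P (e x) =
  if [forall x, P (e x)] then ((\prod_x (e x)`!)%:R)^-1 else 0.
Proof.
case: ifP => [/forallP Pe|/negbT/forallPn[x Nex]]; last first.
  by rewrite (bigD1 x) //= /eP (negbTE Nex) mul0r.
rewrite natr_prod -prodrV => [|x _]; last by rewrite natr_unit_gt0 ?fact_gt0.
by apply: eq_bigr => x _; rewrite /eP Pe.
Qed.

Lemma weighted_count_spow m N k K (c : {ffun 'I_m -> 'I_N} -> nat) : (k < N)%N ->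
  (forall e : {ffun 'I_m -> 'I_N}, \sum_x (e x : nat) = k -> c e * \prod_x (e x)`! = K`!)%N ->
  (forall e : {ffun 'I_m -> 'I_N}, \sum_x (e x : nat) <> k -> c e = 0%N) ->
  (\sum_(e : {ffun 'I_m -> 'I_N}) [forall x, P (e x)] * c e)%:R / K`!%:R =
  spow (eP R P) m k.
Proof.
move=> kN count count0.
rewrite (spow_coef_poly _ _ kN) coef_poly_exp natr_sum mulr_suml [RHS]big_mkcond /=.
apply: eq_bigr => e _; rewrite prod_eP.
case: (eqVneq (\sum_x (e x : nat)) k) => [sum_e|/eqP sum_e]; last first.
  by rewrite count0 // muln0 mul0r.
case: ifP => _; rewrite ?mul0n ?mul0r // mul1n.
by apply: natr_div_eq_inv; rewrite ?count // fact_gt0.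
Qed.

Lemma FP_spow n : FP R P n = spow (eP R P) n n.
Proof.
rewrite /FP fun_count_fibvec; apply: weighted_count_spow => [|e sum_e|e sum_e].
- by rewrite card_ord.
- by apply: card_pfuns; rewrite ?cardsT ?card_ord.
apply: eq_card0 => g; apply/negP => /pfunsP[dom fibs]; apply: sum_e.
rewrite -(eq_bigr _ (fun x _ => fibs x)) sum_fib -[RHS](card_ord n) -cardsT.
by apply: eq_card => x; rewrite inE dom.
Qed.

Lemma TP0 : TP R P 0 = 0.
Proof.
rewrite /TP /tree_count (_ : #|_| = 0%N) ?mul0r //; apply: eq_card0 => par.
rewrite inE; apply/negP => /andP[/andP[/eqP root _] _].
by move: (max_card [set x | par x == None]); rewrite root card_ord.
Qed.

Lemma sderiv_TP n : sderiv (TP R P) n = spow (eP R P) n.+1 n.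
Proof.
rewrite /sderiv /TP factS natrM invrM ?natr_unit_gt0 ?fact_gt0 //.
rewrite mulrCA (mulrCA n.+1%:R) divrr // mulr1 tree_count_fibvec.
apply: weighted_count_spow => [|e sum_e|e sum_e].
- by rewrite card_ord.
- by apply: card_trees; rewrite ?cardsT ?card_ord // => x; rewrite inE.
apply: eq_card0 => par; apply/negP => /treesP[tree fibs]; apply: sum_e.
by rewrite -(eq_bigr _ (fun x _ => fibs x)) (sum_fib_tree tree) cardsT card_ord subn1.
Qed.

Lemma TP_succ n : TP R P n.+1 = spow (eP R P) n.+1 n / n.+1%:R.
Proof. by rewrite -sderiv_TP /sderiv [_ * TP _ _ _]mulrC mulrK. Qed.

Lemma smul_FP_TP n : smul (FP R P) (TP R P) n.+1 = spow (eP R P) n.+1 n.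
Proof.
pose p := \poly_(j < n.+2) eP R P j.
have spow_p m k : (k <= n)%N -> spow (eP R P) m k = (p ^+ m)`_k.
  by move=> kn; apply: spow_coef_poly; rewrite ltnS (leq_trans kn).
rewrite spow_p // /smul big_ord_recr /= subnn TP0 mulr0 addr0.
rewrite -[RHS]/(diag_coef p 1 n) -(diag_tree_conv_eq natr_unit p 0 n).
apply: eq_bigr => i _.
have i_le : (i <= n)%N by rewrite -ltnS.
by rewrite subSn // FP_spow TP_succ !spow_p ?leq_subr.
Qed.

End GeneratingFunctions.

Theorem corollary5p6 (R : comUnitRingType)
    (hQ : forall n : nat, (n.+1)%:R \is a @GRing.unit R)
    (P : pred nat) (hP0 : P 0%N) :
  smul (FP R P) (TP R P) = smul (@sX R) (sderiv (TP R P)) /\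
  (forall n : nat, FP R P n = spow (eP R P) n n).
Proof.
split; last exact: FP_spow hQ P.
apply: functional_extensionality => n; rewrite smul_sX.
case: n => [|n]; last by rewrite (sderiv_TP hQ) (smul_FP_TP hQ).
by rewrite /smul big_ord1 TP0 mulr0.
Qed.
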